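(* Let $G$ be a connected graph with a vertex $u$ of degree $1$ and a vertex $v$ of maximum degree $\Delta \geq 2$ such that $u$ and $v$ are not adjacent. Then $mp(G+uv) \leq mp(G)$; in particular $G$ is not saturated.
   Context: All graphs are finite and simple. A degree monotone path in a graph $G$ is a path $v_1v_2\ldots v_m$ such that $\deg(v_1)\le \cdots\le \deg(v_m)$ or $\deg(v_1)\ge \cdots\ge \deg(v_m)$ (degrees taken in $G$); its length is its number of vertices. $mp(G)$ denotes the maximum length of a degree monotone path in $G$. $G+uv$ denotes $G$ with the edge $uv$ added. A graph $G$ is saturated if $mp(G+e)>mp(G)$ for every pair $e$ of non-adjacent vertices of $G$. *)

(* A finite simple graph on vertex type T : finType is an
   adjacency relation e : rel T that is symmetric and irreflexive. *)
From mathcomp Require Import all_boot.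
Set Implicit Arguments. Unset Strict Implicit. Unset Printing Implicit Defensive.

Section Graphs.
Variable T : finType.

Definition deg (e : rel T) (x : T) : nat := #|[pred y | e x y]|.

Definition is_path (e : rel T) (s : seq T) : bool :=
  uniq s && (if s is x :: s' then path e x s' else true).

Definition dm_path (e : rel T) (s : seq T) : bool :=
  is_path e s &&
  (sorted leq (map (deg e) s) || sorted geq (map (deg e) s)).

(* mp e = maximum number of vertices of a degree monotone path;
   paths have distinct vertices, hence at most #|T| vertices. *)
Definition mp (e : rel T) : nat :=
  \max_(n < #|T|.+1 | [exists s : n.-tuple T, dm_path e s]) n.

Definition add_edge (e : rel T) (u v : T) : rel T :=
  fun x y => [|| e x y, (x == u) && (y == v) | (x == v) && (y == u)].

Definition connected (e : rel T) : Prop := forall x y : T, connect e x y.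

Definition saturated (e : rel T) : Prop :=
  forall x y : T, x != y -> ~~ e x y -> mp e < mp (add_edge e x y).

End Graphs.

From mathcomp Require Import all_boot.
Set Implicit Arguments. Unset Strict Implicit. Unset Printing Implicit Defensive.

(* Let s be a degree monotone path of G + uv, read so that degrees do not
   decrease.  The edge uv raises the degrees of u and v only, and makes v the
   unique vertex of maximum degree Δ + 1, so v can only be the last vertex of s.
   If s does not use the edge uv it is a degree monotone path of G.  Otherwise
   s ends with u v, all its vertices have degree at most 2 in G + uv, and the
   part p of s ending at u is a path of G whose inner vertices have degree 2 and
   whose end u is a leaf.  Since G is connected and v lies outside p, some edge
   leaves p, necessarily at the first vertex x of p, towards a vertex b.  If b
   had degree 1, b p would be a path of the same shape with no edge leaving it;
   so deg b >= 2 >= deg x and b p is a nonincreasing path of G with as many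
   vertices as s. *)

Lemma leq_last_path (a : nat) s : path leq a s -> all (leq^~ (last a s)) (a :: s).
Proof.
elim: s a => [|b s IHs] a /=; first by rewrite leqnn.
by case/andP=> ab /IHs /= /andP[bl ->]; rewrite (leq_trans ab bl) bl.
Qed.

Lemma uniq_last_notin (T : eqType) (x : T) p q : uniq (x :: p ++ q) -> last x p \notin q.
Proof.
rewrite -cat_cons cat_uniq => /and3P[_ /hasPn nq _]; apply/negP=> lq.
by have := nq _ lq; rewrite /= mem_last.
Qed.

Lemma dm_path_rev (T : finType) (e : rel T) s : symmetric e -> dm_path e s -> dm_path e (rev s).
Proof.
move=> sym_e; rewrite /dm_path /is_path rev_uniq !map_rev !rev_sorted.
case: s => [|x t] //=; rewrite lastI rev_rcons rev_path.
case/andP => /andP[-> pt] so; apply/andP; split.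
  by rewrite (eq_path (e' := e)) // => a b; rewrite sym_e.
by rewrite orbC.
Qed.

Section Graph.
Variables (T : finType) (e : rel T).

Lemma size_le_deg x (s : seq T) : uniq s -> all (e x) s -> size s <= deg e x.
Proof. by move=> Us /allP es; apply/card_geqP; exists s; split=> // y /es. Qed.

Lemma deg_ge2 x a b : e x a -> e x b -> a != b -> 1 < deg e x.
Proof. by move=> xa xb ab; apply: (@size_le_deg x [:: a; b]); rewrite /= ?inE ?ab ?xa ?xb. Qed.

Lemma deg_ge3 x a b c : e x a -> e x b -> e x c ->
  a != b -> a != c -> b != c -> 2 < deg e x.
Proof.
move=> xa xb xc ab ac bc; apply: (@size_le_deg x [:: a; b; c]).
  by rewrite /= !inE negb_or ab ac bc.
by rewrite /= xa xb xc.
Qed.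

Lemma deg_subrel (e' : rel T) x : subrel e e' -> deg e x <= deg e' x.
Proof. by move=> ee'; apply/subset_leq_card/subsetP=> y; rewrite !inE; apply: ee'. Qed.

Lemma connect_exit (c : seq T) x y : connect e x y -> x \in c -> y \notin c ->
  exists a b, [/\ a \in c, b \notin c & e a b].
Proof.
case/connectP=> p + ->; elim: p x => [|z p IHp] x /=; first by move=> _ ->.
case/andP=> xz pz xc; case: (boolP (z \in c)) => [zc|zc _]; first exact: IHp.
by exists x, z.
Qed.

Lemma leq_mp (e' : rel T) :
  (forall s, dm_path e' s -> exists2 t, dm_path e t & size s <= size t) ->
  mp e' <= mp e.
Proof.
move=> dom; apply/bigmax_leqP => n /existsP[s /dom[t dt st]].
have Ut : uniq t by case/andP: dt => /andP[].
have tT : size t < #|T|.+1 by rewrite ltnS -(card_uniqP Ut) max_card.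
apply: leq_trans (leq_bigmax_cond (Ordinal tT) _); first by rewrite /= -(size_tuple s).
by apply/existsP; exists (in_tuple t).
Qed.

Hypothesis sym_e : symmetric e.

Lemma nonincr_deg_le2_path x y t :
  path e x t -> uniq (x :: t) -> all (fun z => deg e z <= 2) (x :: t) ->
  e x y -> y \notin x :: t -> path geq (deg e x) (map (deg e) t).
Proof.
elim: t x y => [|z t IHt] x y //= /andP[xz pz] /andP[xn U] /andP[_ /andP[dz D]] xy yn.
apply/andP; split.
  rewrite inE negb_or in yn; case/andP: yn => _ /norP[yz _].
  exact: leq_trans dz (deg_ge2 xy xz yz).
by apply: (IHt z x) => //=; rewrite ?dz // sym_e.
Qed.

Section Pendant.
Variable u : T.
Hypothesis deg_u : deg e u = 1.

Lemma pendant_last x p : path e x p -> uniq (x :: p) -> u \in p -> last x p = u.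
Proof.
move=> + + up; case/splitPr: up => p1 p2.
rewrite cat_path /= sym_e => /and3P[_ ul +] U; case: p2 U => [|z p2] U /=.
  by rewrite last_cat.
case/andP=> uz _; have lz : last x p1 != z.
  by apply: (contraNneq _ (uniq_last_notin U)) => ->; rewrite !inE eqxx orbT.
by have := deg_ge2 ul uz lz; rewrite deg_u.
Qed.

Lemma pendant_path_exit_head x t a b :
  path e x t -> uniq (x :: t) -> last x t = u -> all (fun z => deg e z <= 2) (x :: t) ->
  a \in x :: t -> b \notin x :: t -> e a b -> a = x.
Proof.
move=> P U L D /predU1P[//|a_in]; move: P U L D; case/splitPr: a_in => p1 p2.
rewrite cat_path /= => /and3P[_ la P2] U L D bn ab.
have neq_b w : w \in x :: p1 ++ a :: p2 -> w != b by move=> w_in; apply: contraNneq bn => <-.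
have lb : last x p1 != b by rewrite neq_b // -cat_cons mem_cat mem_last.
rewrite sym_e in la; case: p2 P2 U L D bn ab neq_b => [|z p2] /= P2 U L D bn ab neq_b.
  rewrite last_cat /= in L; rewrite L in la ab.
  by have := deg_ge2 la ab lb; rewrite deg_u.
case/andP: P2 => az _.
have lz : last x p1 != z.
  by apply: (contraNneq _ (uniq_last_notin U)) => ->; rewrite !inE eqxx orbT.
have zb : z != b by rewrite neq_b // inE mem_cat !inE eqxx !orbT.
have deg_a : deg e a <= 2.
  by move: D => /= /andP[_]; rewrite all_cat /= => /andP[_ /andP[]].
by have := leq_trans (deg_ge3 la az ab lz lb zb) deg_a.
Qed.

Lemma pendant_path_exit v x t : connected e -> v \notin x :: t ->
  path e x t -> uniq (x :: t) -> last x t = u -> all (fun z => deg e z <= 2) (x :: t) ->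
  exists2 b, e x b & b \notin x :: t.
Proof.
move=> conn vn P U L D; have [a [b [a_in bn ab]]] := connect_exit (conn x v) (mem_head x t) vn.
by exists b => //; rewrite -(pendant_path_exit_head P U L D a_in bn ab).
Qed.

Lemma pendant_path_extend v x t : connected e -> 1 < deg e v -> v \notin x :: t ->
  path e x t -> uniq (x :: t) -> last x t = u -> all (fun z => deg e z <= 2) (x :: t) ->
  exists b, dm_path e [:: b, x & t].
Proof.
move=> conn dv vn P U L D; have [b xb bn] := pendant_path_exit conn vn P U L D.
have Ub : uniq [:: b, x & t] by rewrite cons_uniq bn.
have Pb : path e b (x :: t) by rewrite /= sym_e xb.
have deg_b : 1 < deg e b.
  rewrite ltnNge; apply/negP=> db.
  have vb : v != b by apply: contraTneq dv => ->; rewrite -leqNgt.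
  have vnb : v \notin [:: b, x & t] by rewrite in_cons negb_or vb.
  have Db : all (fun z => deg e z <= 2) [:: b, x & t] by rewrite /= (leq_trans db).
  have [b' bb' bnb'] := pendant_path_exit conn vnb Pb Ub L Db.
  have xb' : x != b' by apply: contraNneq bnb' => <-; rewrite !inE eqxx orbT.
  have bx : e b x by rewrite sym_e.
  by have := leq_trans (deg_ge2 bx bb' xb') db.
exists b; rewrite /dm_path /is_path Ub Pb /=; apply/orP; right.
have deg_x : deg e x <= 2 by case/andP: D.
by rewrite (leq_trans deg_x deg_b) (nonincr_deg_le2_path P U D xb bn).
Qed.

End Pendant.

Section AddEdge.
Variables u v : T.
Hypotheses (uv : u != v) (nuv : ~~ e u v).
Local Notation e' := (add_edge e u v).

Lemma add_edge_sym : symmetric e'.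
Proof.
move=> x y; rewrite /add_edge sym_e; case: (e y x) => //=.
by case: (x == u); case: (y == v); case: (x == v); case: (y == u).
Qed.

Lemma subrel_add_edge : subrel e e'.
Proof. by move=> x y; rewrite /add_edge => ->. Qed.

Lemma add_edgeE x y : x != v -> y != v -> e' x y = e x y.
Proof. by rewrite /add_edge => /negPf -> /negPf ->; rewrite !andbF !orbF. Qed.

Lemma add_edge_v x : x != u -> e' x v = e x v.
Proof. by rewrite /add_edge [v == u]eq_sym (negPf uv) => /negPf ->; rewrite !andbF !orbF. Qed.

Lemma deg_add_edge x : x != u -> x != v -> deg e' x = deg e x.
Proof.
by move=> /negPf xu /negPf xv; apply: eq_card => y; rewrite !inE /add_edge xu xv orbF.
Qed.

Lemma deg_add_edge_u : deg e' u = (deg e u).+1.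
Proof.
rewrite /deg -add1n.
have -> : 1 = (v \notin [pred y | e u y]) :> nat by rewrite inE nuv.
rewrite -cardU1.
by apply: eq_card => y; rewrite !inE /add_edge eqxx (negPf uv) orbF orbC.
Qed.

Lemma deg_add_edge_v : deg e' v = (deg e v).+1.
Proof.
have nvu : ~~ e v u by rewrite sym_e.
rewrite /deg -add1n.
have -> : 1 = (u \notin [pred y | e v y]) :> nat by rewrite inE nvu.
rewrite -cardU1.
by apply: eq_card => y; rewrite !inE /add_edge eqxx eq_sym (negPf uv) orbC.
Qed.

Lemma add_edge_path x t : v \notin x :: t -> path e' x t = path e x t.
Proof.
move=> vn; apply: (eq_in_path (P := predC1 v)) => [y z /= yv zv|].
  exact: add_edgeE.
by apply/allP=> y y_in /=; apply: contraNneq vn => <-.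
Qed.

Lemma add_edge_sorted_leq x p : v \notin x :: p -> u \notin p ->
  sorted leq (map (deg e') (x :: p)) -> sorted leq (map (deg e) (x :: p)).
Proof.
move=> vn un; have Ep : map (deg e) p = map (deg e') p.
  apply/eq_in_map => y yp; rewrite deg_add_edge //; first by apply: contraNneq un => <-.
  by apply: contraNneq vn => <-; rewrite inE yp orbT.
have dx : deg e x <= deg e' x by apply: deg_subrel subrel_add_edge.
by rewrite /= Ep; case: (map _ p) => [|z l] //= /andP[h ->]; rewrite (leq_trans dx h).
Qed.

Hypotheses (conn : connected e) (deg_u : deg e u = 1).
Hypotheses (deg_v_max : forall x, deg e x <= deg e v) (deg_v_gt1 : 1 < deg e v).

Lemma add_edge_deg_le2 x p : last x p = u ->
  sorted leq (map (deg e') (x :: p)) -> all (fun y => deg e y <= 2) (x :: p).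
Proof.
move=> L S; apply/allP=> y yp.
apply: leq_trans (deg_subrel _ subrel_add_edge) _.
have <- : deg e' (last x p) = 2 by rewrite L deg_add_edge_u deg_u.
by rewrite -last_map; apply: (allP (leq_last_path S)); exact: (map_f (deg e') yp).
Qed.

Lemma add_edge_deg_max x : x != v -> deg e' x < deg e' v.
Proof.
move=> xv; rewrite deg_add_edge_v ltnS; have [->|xu] := eqVneq x u.
  by rewrite deg_add_edge_u deg_u.
by rewrite deg_add_edge ?deg_v_max.
Qed.

Lemma nondecr_add_edge_last p q : uniq (p ++ v :: q) ->
  sorted leq (map (deg e') (p ++ v :: q)) -> q = [::].
Proof.
case: q => [//|z q]; rewrite cat_uniq map_cat => /and3P[_ _ /= /andP[]].
rewrite inE negb_or eq_sym => /andP[zv _] _ /cat_sorted2[_ /= /andP[vz _]].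
by move: vz; rewrite leqNgt add_edge_deg_max.
Qed.

Lemma add_edge_nondecr_path s : is_path e' s -> sorted leq (map (deg e') s) ->
  exists2 t, dm_path e t & size s <= size t.
Proof.
have [vs | vn] := boolP (v \in s).
  case/splitPr: vs => p q /andP[U P] S; have q0 := nondecr_add_edge_last U S; subst q.
  case: p U P S => [|x p] U P S; first by exists [:: v].
  rewrite cats1 in U P S *; rewrite rcons_uniq in U; case/andP: U => vn U.
  rewrite /= rcons_path in P; case/andP: P => P lv.
  rewrite map_rcons /= rcons_path in S; case/andP: S => S _.
  rewrite add_edge_path // in P.
  have [L | Lu] := eqVneq (last x p) u.
    have [b dm] := pendant_path_extend deg_u conn deg_v_gt1 vn P U L (add_edge_deg_le2 L S).
    by exists [:: b, x & p]; rewrite // size_rcons.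
  have un : u \notin p.
    by apply/negP=> /(pendant_last deg_u P U) L; rewrite L eqxx in Lu.
  exists (rcons (x :: p) v) => //.
  apply/andP; split.
    by rewrite /is_path rcons_uniq vn U /= rcons_path P -(add_edge_v Lu).
  apply/orP; left; rewrite /= map_rcons rcons_path last_map deg_v_max andbT.
  exact: add_edge_sorted_leq vn un S.
case: s vn => [|x t] vn /andP[U P] S; first by exists [::].
rewrite add_edge_path // in P.
have [ut | un] := boolP (u \in t).
  have L := pendant_last deg_u P U ut.
  have [b dm] := pendant_path_extend deg_u conn deg_v_gt1 vn P U L (add_edge_deg_le2 L S).
  by exists [:: b, x & t].
by exists (x :: t); rewrite // /dm_path /is_path U P (add_edge_sorted_leq vn un S).
Qed.

Lemma add_edge_dm_path s : dm_path e' s -> exists2 t, dm_path e t & size s <= size t.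
Proof.
move=> dm; case/andP: (dm) => Ps /orP[S|S]; first exact: add_edge_nondecr_path Ps S.
have /andP[Pr _] := dm_path_rev add_edge_sym dm.
rewrite -(size_rev s); apply: add_edge_nondecr_path Pr _.
by rewrite map_rev rev_sorted.
Qed.

End AddEdge.
End Graph.

Theorem lemma2p2 (T : finType) (e : rel T) (u v : T) :
  symmetric e -> irreflexive e -> connected e ->
  deg e u = 1 ->
  (forall x : T, deg e x <= deg e v) -> 2 <= deg e v ->
  ~~ e u v ->
  mp (add_edge e u v) <= mp e /\ ~ saturated e.
Proof.
move=> sym_e _ conn deg_u deg_v_max deg_v_gt1 nuv.
have uv : u != v by apply: contraTneq deg_v_gt1 => <-; rewrite deg_u.
have mp_le : mp (add_edge e u v) <= mp e.
  exact/leq_mp/(add_edge_dm_path sym_e uv nuv conn deg_u deg_v_max deg_v_gt1).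
by split=> // sat; have := sat u v uv nuv; rewrite ltnNge mp_le.
Qed.
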